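(* Let $\beta=(\pi_\ell)_{\ell=1}^L$ be a chainable architecture, let $\mathbf{M}$ be a complex matrix of size $a_1b_1d_1\times a_Lc_Ld_L$, and let $s,q\in\{1,\dots,L-1\}$. If $\mathbf{N}$ is a projection of $\mathbf{M}$ onto $\mathcal{B}^{\beta_q}$, i.e. $\mathbf{N}\in\mathcal{B}^{\beta_q}$ and $\|\mathbf{M}-\mathbf{N}\|_F=\min_{\mathbf{B}\in\mathcal{B}^{\beta_q}}\|\mathbf{M}-\mathbf{B}\|_F$, then $$E^{\beta_s}(\mathbf{M})\ge E^{\beta_s}(\mathbf{N}).$$
   Context: A pattern is a tuple $\pi=(a,b,c,d)$ of positive integers; $\mathbf{S}_\pi:=\mathbf{I}_a\otimes\mathbf{1}_{b\times c}\otimes\mathbf{I}_d\in\{0,1\}^{abd\times acd}$. A $\pi$-factor is a complex $abd\times acd$ matrix with support in that of $\mathbf{S}_\pi$; $\Sigma^\pi$ is the set of $\pi$-factors. Patterns $\pi=(a,b,c,d),\pi'=(a',b',c',d')$ are chainable if $ac/a'=b'd'/d$ is an integer, $a\mid a'$, $d'\mid d$; then $\pi*\pi':=(a,bd/d',a'c'/a,d')$. An architecture $\beta=(\pi_\ell)_{\ell=1}^L$, $\pi_\ell=(a_\ell,b_\ell,c_\ell,d_\ell)$, is a sequence of patterns with $a_\ell c_\ell d_\ell=a_{\ell+1}b_{\ell+1}d_{\ell+1}$, chainable if every consecutive pair is chainable; $\pi_p*\cdots*\pi_q$ is the iterated product. For $s\in\{1,\dots,L-1\}$, $\beta_s:=(\pi_1*\cdots*\pi_s,\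 \pi_{s+1}*\cdots*\pi_L)$, $\mathcal{B}^{\beta_s}:=\{\mathbf{X}\mathbf{Y}:\mathbf{X}\in\Sigma^{\pi_1*\cdots*\pi_s},\mathbf{Y}\in\Sigma^{\pi_{s+1}*\cdots*\pi_L}\}$, and $E^{\beta_s}(\mathbf{A}):=\min_{\mathbf{B}\in\mathcal{B}^{\beta_s}}\|\mathbf{A}-\mathbf{B}\|_F$. *)

From HB Require Import structures.
From mathcomp Require Import all_boot all_order all_algebra.
From mathcomp Require Import all_classical all_reals.
From mathcomp Require Import complex.

Set Implicit Arguments.
Unset Strict Implicit.
Unset Printing Implicit Defensive.

Import Order.TTheory GRing.Theory Num.Theory.
Local Open Scope ring_scope.
Local Open Scope classical_set_scope.

Record pattern := Pattern { pa : nat; pb : nat; pc : nat; pd : nat }.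

Definition pattern_pos (p : pattern) : Prop :=
  (0 < pa p)%N /\ (0 < pb p)%N /\ (0 < pc p)%N /\ (0 < pd p)%N.

Definition prows (p : pattern) : nat := (pa p * pb p * pd p)%N.
Definition pcols (p : pattern) : nat := (pa p * pc p * pd p)%N.

(* Entry (i,j) of S_pi = I_a (x) 1_{b x c} (x) I_d (0-based, Kronecker order:
   i = i1*(b*d) + i2*d + i3, j = j1*(c*d) + j2*d + j3) is 1 iff i1 = j1 and
   i3 = j3. *)
Definition in_supp (p : pattern) (i j : nat) : bool :=
  (i %/ (pb p * pd p) == j %/ (pc p * pd p))%N && (i %% pd p == j %% pd p)%N.

Definition is_factor (R : realType) (p : pattern) (r k : nat)
  (X : 'M[R[i]]_(r, k)) : Prop :=
  r = prows p /\ k = pcols p /\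
  (forall (i : 'I_r) (j : 'I_k), ~~ in_supp p i j -> X i j = 0).

Definition chainable2 (p p' : pattern) : Prop :=
  [/\ (pa p' %| pa p * pc p)%N, (pd p %| pb p' * pd p')%N,
      (pa p * pc p %/ pa p' = pb p' * pd p' %/ pd p)%N,
      (pa p %| pa p')%N & (pd p' %| pd p)%N].

Definition pmul (p p' : pattern) : pattern :=
  Pattern (pa p) (pb p * pd p %/ pd p')%N (pa p' * pc p' %/ pa p)%N (pd p').

(* An architecture is a nonempty sequence of patterns (index l = 1..L is
   stored at position l-1). *)
Definition dummy_pattern := Pattern 1 1 1 1.
Definition pat (beta : seq pattern) (l : nat) : pattern :=
  nth dummy_pattern beta l.-1.

Definition is_architecture (beta : seq pattern) : Prop :=
  (0 < size beta)%N /\ (forall l, (1 <= l)%N -> (l <= size beta)%N -> pattern_pos (pat beta l)) /\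
  (forall l, (1 <= l)%N -> (l < size beta)%N ->
     pcols (pat beta l) = prows (pat beta l.+1)).

Definition chainable_arch (beta : seq pattern) : Prop :=
  is_architecture beta /\
  (forall l, (1 <= l)%N -> (l < size beta)%N ->
     chainable2 (pat beta l) (pat beta l.+1)).

Definition pprod (beta : seq pattern) (p q : nat) : pattern :=
  foldl (fun acc l => pmul acc (pat beta l)) (pat beta p) (iota p.+1 (q - p)).

Definition Bset (R : realType) (beta : seq pattern) (s m n : nat)
  : set 'M[R[i]]_(m, n) :=
  [set B | exists k (X : 'M[R[i]]_(m, k)) (Y : 'M[R[i]]_(k, n)),
      is_factor (pprod beta 1 s) X /\
      is_factor (pprod beta s.+1 (size beta)) Y /\ B = X *m Y].

Definition frob (R : realType) (m n : nat) (A : 'M[R[i]]_(m, n)) : R :=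
  Num.sqrt (\sum_(i < m) \sum_(j < n) ((@complex.Re R (A i j)) ^+ 2 + (@complex.Im R (A i j)) ^+ 2)).

Definition Ebeta (R : realType) (beta : seq pattern) (s m n : nat)
  (A : 'M[R[i]]_(m, n)) : R :=
  inf [set frob (A - B) | B in @Bset R beta s m n].

(* Write N = X Y with X a (pi_1 * ... * pi_q)-factor and Y a (pi_(q+1) * ... * pi_L)-factor.
   Since N is a best approximation, fixing Y, each row i of N is the orthogonal projection
   of row i of M onto the span Z_i of the rows of Y that the support of row i of X may use.
   Let s <= q and B = X' Y' in B^(beta_s).  Chainability nests the supports: two rows
   sharing a column of the left beta_s-factor have the same left beta_q-support, so they
   project onto the same Z_i; and every row of Y lies in a single column block of the right
   beta_s-pattern, so projecting onto Z_i preserves right beta_s-supports.  Replacing each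
   row t of Y' by its projection onto Z_i, for any row i of X' using t, gives a right
   beta_s-factor Y'' with row i of N - X' Y'' equal to the projection of row i of M - X' Y';
   projections being contractions, ||N - X' Y''|| <= ||M - X' Y'||.  The case s > q is the
   transposed one, and taking infima concludes. *)

From HB Require Import structures.
From mathcomp Require Import all_boot all_order all_algebra.
From mathcomp Require Import all_classical all_reals.
From mathcomp Require Import complex.

Set Implicit Arguments.
Unset Strict Implicit.
Unset Printing Implicit Defensive.

Import Order.TTheory GRing.Theory Num.Theory.

Definition blockkey (w d i : nat) := (i %/ w, i %% d).

Lemma blockkey_coarsen w w' d d' i i' : w %| w' -> d' %| d ->
  blockkey w d i = blockkey w d i' -> blockkey w' d' i = blockkey w' d' i'.
Proof.
move=> /dvdnP[c ->] dd' [qi ri]; rewrite /blockkey mulnC !divnMA qi.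
by rewrite -(modn_dvdm i dd') -(modn_dvdm i' dd') ri.
Qed.

Definition rowkey p i := blockkey (pb p * pd p) (pd p) i.
Definition colkey p j := blockkey (pc p * pd p) (pd p) j.

Lemma in_suppE p i j : in_supp p i j = (rowkey p i == colkey p j).
Proof. by rewrite /in_supp xpair_eqE. Qed.

Lemma pprod_id beta p : pprod beta p p = pat beta p.
Proof. by rewrite /pprod subnn. Qed.

Lemma pprodS beta p q :
  p <= q -> pprod beta p q.+1 = pmul (pprod beta p q) (pat beta q.+1).
Proof.
by move=> pq; rewrite /pprod subSn // -[(q - p).+1]addn1 iotaD foldl_cat addSn subnKC.
Qed.

Lemma pprod_pa beta p q : pa (pprod beta p q) = pa (pat beta p).
Proof. by rewrite /pprod; elim: (iota _ _) (pat beta p) => //= l s IH acc; rewrite IH. Qed.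

Lemma pprod_pd beta p q : p <= q -> pd (pprod beta p q) = pd (pat beta q).
Proof.
rewrite leq_eqVlt => /orP[/eqP <-|]; first by rewrite pprod_id.
by case: q => // q; rewrite ltnS => /pprodS ->.
Qed.

Lemma pprod_pc beta p q : p <= q -> 0 < pa (pat beta p) ->
  pc (pprod beta p q) = pa (pat beta q) * pc (pat beta q) %/ pa (pat beta p).
Proof.
rewrite leq_eqVlt => /orP[/eqP <-|]; first by move=> pa0; rewrite pprod_id mulKn.
by case: q => // q; rewrite ltnS => /pprodS -> _; rewrite /= pprod_pa.
Qed.

Section ChainableArchitecture.
Variable beta : seq pattern.
Hypothesis beta_chainable : chainable_arch beta.
Local Notation L := (size beta).
Local Notation P s := (pprod beta 1 s).
Local Notation Q s := (pprod beta s.+1 L).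

Let index := [pred l | 0 < l <= L].

Lemma index_convex : {in index &, forall i j k, i < k < j -> k \in index}.
Proof.
move=> i j /andP[i0 _] /andP[_ jL] k /andP[ik kj].
by rewrite inE (leq_ltn_trans (leq0n i) ik) (ltnW (leq_trans kj jL)).
Qed.

Lemma arch_pa_gt0 l : 0 < l <= L -> 0 < pa (pat beta l).
Proof. by case/andP=> l0 lL; case: beta_chainable => [[_ [/(_ l l0 lL) []]]]. Qed.

Lemma arch_chainable2 l : 0 < l < L -> chainable2 (pat beta l) (pat beta l.+1).
Proof. by case/andP=> l0 lL; exact: beta_chainable.2. Qed.

Lemma pa_dvd_homo :
  {in index &, {homo (fun l => pa (pat beta l)) : l l' / l <= l' >-> l %| l'}}.
Proof.
apply: homo_leq_in index_convex _ => [x|y x z|l /andP[l0 _] /andP[_ lL]].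
- exact: dvdnn.
- exact: dvdn_trans.
- by case: (arch_chainable2 (l := l)); rewrite ?l0.
Qed.

Lemma pd_dvd_homo :
  {in index &, {homo (fun l => pd (pat beta l)) : l l' / l <= l' >-> l' %| l}}.
Proof.
apply: homo_leq_in index_convex _ => [x|y x z yx zy|l /andP[l0 _] /andP[_ lL]].
- exact: dvdnn.
- exact: dvdn_trans zy yx.
- by case: (arch_chainable2 (l := l)); rewrite ?l0.
Qed.

Lemma prefix_row_width s :
  0 < s <= L -> pb (P s) * pd (P s) = pb (pat beta 1) * pd (pat beta 1).
Proof.
elim: s => // -[_ _|s IH /andP[_ sL]]; first by rewrite pprod_id.
rewrite pprodS //= divnK -?IH ?(ltnW sL) // pprod_pd // dvdn_mull //.
by case: (arch_chainable2 (l := s.+1)); rewrite ?sL.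
Qed.

Lemma rowkey_prefix s q i i' : 0 < s <= q -> q <= L ->
  rowkey (P s) i = rowkey (P s) i' -> rowkey (P q) i = rowkey (P q) i'.
Proof.
case/andP=> s0 sq qL; have q0 := leq_trans s0 sq; have sL := leq_trans sq qL.
rewrite /rowkey !prefix_row_width ?s0 ?q0 // !pprod_pd //.
by apply: blockkey_coarsen => //; apply: pd_dvd_homo; rewrite // inE ?s0 ?q0.
Qed.

Lemma suffix_pc_dvd s q : s <= q -> q < L -> pc (Q q) %| pc (Q s).
Proof.
move=> sq qL; have ss : s.+1 \in index by rewrite inE /= (leq_ltn_trans sq qL).
have qq : q.+1 \in index by rewrite inE /= qL.
have LL : L \in index by rewrite inE /= leqnn andbT (leq_ltn_trans (leq0n q) qL).
rewrite !pprod_pc ?arch_pa_gt0 //.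
have aa := pa_dvd_homo ss qq sq; have aL := pa_dvd_homo qq LL qL.
rewrite dvdn_divRL; last exact: dvdn_mulr (dvdn_trans aa aL).
by rewrite -{2}(divnK (dvdn_mulr (pc (pat beta L)) aL)) dvdn_mul.
Qed.

Lemma colkey_suffix s q j j' : s <= q -> q < L ->
  colkey (Q q) j = colkey (Q q) j' -> colkey (Q s) j = colkey (Q s) j'.
Proof.
move=> sq qL; rewrite /colkey !pprod_pd ?(leq_ltn_trans sq qL) //.
by apply: blockkey_coarsen => //; rewrite dvdn_mul ?suffix_pc_dvd.
Qed.
End ChainableArchitecture.

Local Open Scope ring_scope.
Local Open Scope sesquilinear_scope.
Local Open Scope complex_scope.
Local Open Scope classical_set_scope.

Local Notation "''[' u ]" := (dotmx u u) : ring_scope.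

Definition supported (C : nmodType) m n (S : 'I_m -> 'I_n -> bool) (A : 'M[C]_(m, n)) :=
  forall i j, ~~ S i j -> A i j = 0.

Lemma supported_tr (C : nmodType) m n (S : 'I_m -> 'I_n -> bool) (A : 'M[C]_(m, n)) :
  supported S A -> supported (fun j i => S i j) A^T.
Proof. by move=> suppA j i Sij; rewrite mxE suppA. Qed.

Definition mask_mx {C : pzSemiRingType} n (P : pred 'I_n) : 'M[C]_n :=
  diag_mx (\row_j (P j)%:R).

Section Mask.
Variable C : pzSemiRingType.

Lemma eq_mask_mx n (P Q : pred 'I_n) : P =1 Q -> mask_mx P = mask_mx Q :> 'M[C]_n.
Proof. by move=> PQ; apply/matrixP => i j; rewrite !mxE PQ. Qed.

Lemma mulmx_maskE m n (A : 'M[C]_(m, n)) (P : pred 'I_n) i j :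
  (A *m mask_mx P) i j = if P j then A i j else 0.
Proof. by rewrite mul_mx_diag !mxE; case: (P j); rewrite ?mulr1 ?mulr0. Qed.

Lemma mask_mulmxE m n (A : 'M[C]_(m, n)) (P : pred 'I_m) i j :
  (mask_mx P *m A) i j = if P i then A i j else 0.
Proof. by rewrite mul_diag_mx !mxE; case: (P i); rewrite ?mul1r ?mul0r. Qed.

Lemma supported_rowP m n (S : 'I_m -> 'I_n -> bool) (A : 'M[C]_(m, n)) :
  supported S A <-> forall i, row i A *m mask_mx (S i) = row i A.
Proof.
split=> [suppA i | rowA i j Sij]; last first.
  by have /rowP/(_ j) := rowA i; rewrite mulmx_maskE mxE (negPf Sij).
apply/rowP => j; rewrite mulmx_maskE mxE.
by case: ifP => // /negbT /suppA ->.
Qed.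
End Mask.

Lemma mask_mx_adj (C : numClosedFieldType) n (P : pred 'I_n) :
  (mask_mx P : 'M[C]_n)^t* = mask_mx P.
Proof.
apply/matrixP => i j; rewrite !mxE.
by case: eqVneq => [->|_]; rewrite ?mulr1n ?conjC_nat // !mulr0n conjC0.
Qed.

Lemma mulmx_mask_sub (C : fieldType) k n (Z : 'M[C]_(k, n)) (P : pred 'I_n) :
  (forall r j j', Z r j != 0 -> Z r j' != 0 -> P j -> P j') ->
  (Z *m mask_mx P <= Z)%MS.
Proof.
move=> Zrows; set Q := [pred r | [exists j, (Z r j != 0) && P j]].
suff -> : Z *m mask_mx P = mask_mx Q *m Z by exact: submxMl.
apply/matrixP => r j; rewrite mulmx_maskE mask_mulmxE inE.
have [->|Zrj] := eqVneq (Z r j) 0; first by do 2!case: ifP.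
case: ifP => Pj; case: existsP => //.
- by case; exists j; rewrite Zrj Pj.
- by case=> j' /andP[Zrj' Pj']; have := Zrows r j' j Zrj' Zrj Pj'; rewrite Pj.
Qed.

Section OrthoProj.
Variable C : numClosedFieldType.

Lemma trmxC_mul m n p (A : 'M[C]_(m, n)) (B : 'M_(n, p)) : (A *m B)^t* = B^t* *m A^t*.
Proof. by rewrite trmx_mul map_mxM. Qed.

Lemma ortho_submx p q n (A : 'M[C]_(p, n)) (U : 'M_(q, n)) r (W : 'M_(r, n)) :
  A *m U^t* = 0 -> (W <= U)%MS -> A *m W^t* = 0.
Proof. by move=> AU /submxP[D ->]; rewrite trmxC_mul mulmxA AU mul0mx. Qed.

Lemma dotmx_ortho n (u v : 'rV[C]_n) : u *m v^t* = 0 -> dotmx u v = 0.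
Proof. by rewrite dotmxE => ->; rewrite mxE. Qed.

Lemma proj_ortho_compl_ortho p m n (U : 'M[C]_(p, n)) (W : 'M_(m, n)) :
  (W - W *m proj_ortho U) *m U^t* = 0.
Proof. exact/orthomx1P/proj_ortho_compl_sub. Qed.

Lemma proj_orthoP p n (U : 'M[C]_(p, n)) (v w : 'rV_n) :
  (w <= U)%MS -> (v - w) *m U^t* = 0 -> v *m proj_ortho U = w.
Proof.
move=> wU /orthomx1P vwU.
by rewrite -[v in LHS](subrK w) mulmxDl proj_ortho_0 // proj_ortho_id // add0r.
Qed.

Lemma dnorm_sub_proj_ortho p n (U : 'M[C]_(p, n)) (v w : 'rV_n) :
  (w <= U)%MS -> '[v - w] = '[v - v *m proj_ortho U] + '[v *m proj_ortho U - w].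
Proof.
move=> wU; rewrite -hnormDd ?addrA ?subrK //; apply: dotmx_ortho.
apply: ortho_submx (proj_ortho_compl_ortho U v) _.
by rewrite addmx_sub ?eqmx_opp ?proj_ortho_sub.
Qed.

Lemma dnorm_proj_ortho p n (U : 'M[C]_(p, n)) (v : 'rV_n) :
  '[v *m proj_ortho U] <= '[v].
Proof.
have := dnorm_sub_proj_ortho v (sub0mx 1 U); rewrite !subr0 => ->.
by rewrite lerDr dnorm_ge0.
Qed.

Lemma proj_ortho_stable p n (U : 'M[C]_(p, n)) (D : 'M_n) (v : 'rV_n) :
  D^t* = D -> (U *m D <= U)%MS -> v *m D = v ->
  v *m proj_ortho U *m D = v *m proj_ortho U.
Proof.
move=> hermD UD vD; apply/esym/proj_orthoP.
  have [X ->] := submxP (proj_ortho_sub U v).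
  by rewrite -mulmxA; apply: submx_trans (submxMl _ _) _ .
have DU : D *m U^t* = (U *m D)^t* by rewrite trmxC_mul hermD.
rewrite -{1}vD -mulmxBl -mulmxA DU.
exact: ortho_submx (proj_ortho_compl_ortho U v) UD.
Qed.
End OrthoProj.

Lemma ler_sumD1 (C : numDomainType) (I : finType) (F G : I -> C) i :
  \sum_j F j <= \sum_j G j -> (forall j, j != i -> F j = G j) -> F i <= G i.
Proof.
move=> FG FGj; move: FG; rewrite (bigD1 i) // [X in _ <= X](bigD1 i) //=.
have -> : \sum_(j | j != i) G j = \sum_(j | j != i) F j by apply: eq_bigr => j /FGj.
by rewrite lerD2r.
Qed.

Section SquaredFrobenius.
Variable C : numClosedFieldType.

Definition frob2 m n (A : 'M[C]_(m, n)) : C := \sum_i '[row i A].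

Lemma frob2_tr m n (A : 'M[C]_(m, n)) : frob2 A^T = frob2 A.
Proof.
rewrite /frob2; under eq_bigr do rewrite dotmxE mxE.
under [RHS]eq_bigr do rewrite dotmxE mxE.
by rewrite exchange_big; apply: eq_bigr => i _; apply: eq_bigr => j _; rewrite !mxE.
Qed.

Lemma frob2_le_row m n (A B : 'M[C]_(m, n)) i :
  frob2 A <= frob2 B -> (forall i', i' != i -> row i' A = row i' B) ->
  '[row i A] <= '[row i B].
Proof. by move=> AB rowsAB; apply: ler_sumD1 AB _ => i' /rowsAB ->. Qed.

Lemma frob2_sub_mul_tr m n k (A : 'M[C]_(m, n)) (B : 'M_(m, k)) (D : 'M_(k, n)) :
  frob2 (A - B *m D) = frob2 (A^T - D^T *m B^T).
Proof. by rewrite -frob2_tr linearB /= trmx_mul. Qed.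
End SquaredFrobenius.

Lemma mul_conjc (R : rcfType) (z : R[i]) :
  z * z^* = ((complex.Re z) ^+ 2 + (complex.Im z) ^+ 2)%:C.
Proof. by case: z => a b /=; simpc; rewrite !expr2 (mulrC b a) addNr. Qed.

Lemma frob_sqr (R : realType) m n (A : 'M[R[i]]_(m, n)) : (frob A ^+ 2)%:C = frob2 A.
Proof.
rewrite sqr_sqrtr; last by do 2!apply: sumr_ge0 => ? _; rewrite addr_ge0 ?sqr_ge0.
rewrite rmorph_sum; apply: eq_bigr => i _; rewrite dotmxE mxE rmorph_sum.
by apply: eq_bigr => j _; rewrite !mxE mul_conjc.
Qed.

Lemma frob_le (R : realType) m n (A B : 'M[R[i]]_(m, n)) :
  (frob A <= frob B) = (frob2 A <= frob2 B).
Proof. by rewrite -ler_sqr ?nnegrE ?sqrtr_ge0 // -lecR !frob_sqr. Qed.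

Section OptimalFactorExchange.
Variables (C : numClosedFieldType) (m n k : nat) (SX : 'I_m -> 'I_k -> bool).
Variables (M : 'M[C]_(m, n)) (X : 'M[C]_(m, k)) (Y : 'M[C]_(k, n)).
Hypothesis X_supp : supported SX X.
Hypothesis X_opt :
  forall X2, supported SX X2 -> frob2 (M - X *m Y) <= frob2 (M - X2 *m Y).

Let Yspan i := mask_mx (SX i) *m Y.

Lemma row_opt_proj i : row i (X *m Y) = row i M *m proj_ortho (Yspan i).
Proof.
have XYi_sub : (row i (X *m Y) <= Yspan i)%MS.
  by move/supported_rowP: X_supp => Xrows; rewrite row_mul -Xrows -mulmxA submxMl.
have [D MP] := submxP (proj_ortho_sub (Yspan i) (row i M)).
(* Replacing row i of X by the coordinates of the projection is admissible, and by
   Pythagoras it is strictly better unless row i of X Y already is the projection. *)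
pose X2 := \matrix_i' (if i' == i then D *m mask_mx (SX i) else row i' X).
have X2_supp : supported SX X2.
  move=> i' j Si'j; rewrite mxE; have [ii|_] := eqVneq i' i; last by rewrite mxE X_supp.
  by rewrite mulmx_maskE -ii (negPf Si'j).
have X2Yi : row i (X2 *m Y) = row i M *m proj_ortho (Yspan i).
  by rewrite row_mul rowK eqxx MP -mulmxA.
have rows_eq i' : i' != i -> row i' (M - X *m Y) = row i' (M - X2 *m Y).
  by move=> ne; rewrite !linearB /= !row_mul rowK (negPf ne).
have := frob2_le_row (X_opt X2_supp) rows_eq.
rewrite !linearB /= X2Yi (dnorm_sub_proj_ortho (row i M) XYi_sub) gerDl => le0.
by apply/esym/eqP; rewrite -subr_eq0 -(dnorm_eq0 (@dotmx _ _)) eq_le le0 dnorm_ge0.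
Qed.

Variables (k' : nat) (SX' : 'I_m -> 'I_k' -> bool) (SY' : 'I_k' -> 'I_n -> bool).
Hypothesis SX_classes : forall i i' t, SX' i t -> SX' i' t -> SX i =1 SX i'.
Hypothesis Y_blocks :
  forall r t j j', Y r j != 0 -> Y r j' != 0 -> SY' t j -> SY' t j'.

Lemma Yspan_mask_sub i t : (Yspan i *m mask_mx (SY' t) <= Yspan i)%MS.
Proof.
apply: mulmx_mask_sub => r j j'; rewrite !mask_mulmxE.
by case: ifP => _; [exact: Y_blocks | rewrite eqxx].
Qed.

Lemma left_factor_exchange X' Y' : supported SX' X' -> supported SY' Y' ->
  exists2 Y'', supported SY' Y'' & frob2 (X *m Y - X' *m Y'') <= frob2 (M - X' *m Y').
Proof.
move=> X'_supp /supported_rowP Y'_rows.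
pose P i := proj_ortho (Yspan i).
have P_classes i i' t : SX' i t -> SX' i' t -> P i = P i'.
  by move=> Sit Si't; rewrite /P /Yspan (eq_mask_mx _ (SX_classes Sit Si't)).
pose Y'' := \matrix_t
  (if [pick i | SX' i t] is Some i then row t Y' *m P i else row t Y').
exists Y''.
  apply/supported_rowP => t; rewrite rowK; case: pickP => [i _|_]; last exact: Y'_rows.
  by apply: proj_ortho_stable; rewrite ?mask_mx_adj ?Yspan_mask_sub ?Y'_rows.
apply: ler_sum => i _.
suff -> : row i (X *m Y - X' *m Y'') = row i (M - X' *m Y') *m P i.
  exact: dnorm_proj_ortho.
rewrite !linearB /= mulmxBl row_opt_proj; congr (_ - _).
rewrite !row_mul !(mulmx_sum_row (row i X')) mulmx_suml; apply: eq_bigr => t _.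
rewrite -scalemxAl rowK mxE.
have [Sit|/X'_supp->] := boolP (SX' i t); last by rewrite !scale0r.
by case: pickP => [i0 Si0t|/(_ i)]; [rewrite (P_classes _ _ _ Si0t Sit) | rewrite Sit].
Qed.

End OptimalFactorExchange.

Lemma right_factor_exchange (C : numClosedFieldType) m n k (SY : 'I_k -> 'I_n -> bool)
    (M : 'M[C]_(m, n)) (X : 'M[C]_(m, k)) (Y : 'M[C]_(k, n)) :
    supported SY Y ->
    (forall Y2, supported SY Y2 -> frob2 (M - X *m Y) <= frob2 (M - X *m Y2)) ->
  forall k' (SX' : 'I_m -> 'I_k' -> bool) (SY' : 'I_k' -> 'I_n -> bool),
    (forall j j' t, SY' t j -> SY' t j' -> SY^~ j =1 SY^~ j') ->
    (forall r t i i', X i r != 0 -> X i' r != 0 -> SX' i t -> SX' i' t) ->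
  forall X' Y', supported SX' X' -> supported SY' Y' ->
  exists2 X'', supported SX' X'' & frob2 (X *m Y - X'' *m Y') <= frob2 (M - X' *m Y').
Proof.
move=> Y_supp Y_opt k' SX' SY' SY_classes X_blocks X' Y' X'_supp Y'_supp.
have Y_optT Y2 : supported (fun j r => SY r j) Y2 ->
    frob2 (M^T - Y^T *m X^T) <= frob2 (M^T - Y2 *m X^T).
  move=> /supported_tr/Y_opt.
  by rewrite (frob2_sub_mul_tr M X Y) (frob2_sub_mul_tr M X) trmxK.
have X_blocksT r t i i' : X^T r i != 0 -> X^T r i' != 0 -> SX' i t -> SX' i' t.
  by rewrite !mxE; exact: X_blocks.
have [X''T X''T_supp] := left_factor_exchange (supported_tr Y_supp) Y_optT
  SY_classes X_blocksT (supported_tr Y'_supp) (supported_tr X'_supp).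
exists X''T^T; first exact: supported_tr X''T_supp.
by rewrite (frob2_sub_mul_tr M) (frob2_sub_mul_tr (X *m Y)) trmx_mul trmxK.
Qed.

Lemma supported_neq0 (C : nmodType) m n (S : 'I_m -> 'I_n -> bool)
    (A : 'M[C]_(m, n)) i j :
  supported S A -> A i j != 0 -> S i j.
Proof. by move=> suppA; apply: contraNT => /suppA ->. Qed.

Lemma in_supp_rowkey p (i i' t : nat) :
  in_supp p i t -> in_supp p i' t -> rowkey p i = rowkey p i'.
Proof. by rewrite !in_suppE => /eqP-> /eqP->. Qed.

Lemma in_supp_colkey p (r j j' : nat) :
  in_supp p r j -> in_supp p r j' -> colkey p j = colkey p j'.
Proof. by rewrite !in_suppE => /eqP<- /eqP<-. Qed.

Section BsetExchange.
Variables (R : realType) (beta : seq pattern) (m n k s q : nat).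
Hypothesis beta_chainable : chainable_arch beta.
Hypotheses (s_range : (0 < s < size beta)%N) (q_range : (0 < q < size beta)%N).
Local Notation P l := (pprod beta 1 l).
Local Notation Q l := (pprod beta l.+1 (size beta)).
Variables (M : 'M[R[i]]_(m, n)) (X : 'M[R[i]]_(m, k)) (Y : 'M[R[i]]_(k, n)).
Hypotheses (X_fac : is_factor (P q) X) (Y_fac : is_factor (Q q) Y).
Hypothesis XY_opt : forall B, Bset beta q B -> frob (M - X *m Y) <= frob (M - B).

Lemma Bset_exchange_prefix B : (s <= q)%N -> Bset beta s B ->
  exists2 B', Bset beta s B' & frob (X *m Y - B') <= frob (M - B).
Proof.
move=> sq [k' [X' [Y' [X'_fac [Y'_fac ->]]]]].
case/andP: s_range => s0 _; case/andP: q_range => _ qL.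
have X_opt X2 : supported (fun i r => in_supp (P q) i r) X2 ->
    frob2 (M - X *m Y) <= frob2 (M - X2 *m Y).
  by case: X_fac => Xr [Xk _] X2_supp; rewrite -frob_le; apply: XY_opt; exists k, X2, Y.
have SX_classes i i' t : in_supp (P s) i t -> in_supp (P s) i' t ->
    in_supp (P q) i =1 in_supp (P q) i'.
  move=> /in_supp_rowkey Sit /Sit /(rowkey_prefix beta_chainable) eqi r.
  by rewrite !in_suppE (eqi q) ?s0 ?sq // ltnW.
have Y_blocks r t j j' : Y r j != 0 -> Y r j' != 0 ->
    in_supp (Q s) t j -> in_supp (Q s) t j'.
  move=> /(supported_neq0 Y_fac.2.2) Yrj /(supported_neq0 Y_fac.2.2) Yrj'.
  rewrite !in_suppE => /eqP->; apply/eqP/(colkey_suffix beta_chainable sq qL).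
  exact: in_supp_colkey Yrj Yrj'.
have [Y'' Y''_supp] := left_factor_exchange X_fac.2.2 X_opt SX_classes Y_blocks
  X'_fac.2.2 Y'_fac.2.2.
rewrite -frob_le => le; exists (X' *m Y'') => //.
by case: Y'_fac => Y'r [Y'k _]; exists k', X', Y''.
Qed.

Lemma Bset_exchange_suffix B : (q < s)%N -> Bset beta s B ->
  exists2 B', Bset beta s B' & frob (X *m Y - B') <= frob (M - B).
Proof.
move=> qs [k' [X' [Y' [X'_fac [Y'_fac ->]]]]].
case/andP: s_range => _ sL; case/andP: q_range => q0 _.
have Y_opt Y2 : supported (fun r j => in_supp (Q q) r j) Y2 ->
    frob2 (M - X *m Y) <= frob2 (M - X *m Y2).
  by case: Y_fac => Yr [Yk _] Y2_supp; rewrite -frob_le; apply: XY_opt; exists k, X, Y2.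
have SY_classes j j' t : in_supp (Q s) t j -> in_supp (Q s) t j' ->
    (fun r => in_supp (Q q) r j) =1 (fun r => in_supp (Q q) r j').
  move=> /in_supp_colkey Stj /Stj /(colkey_suffix beta_chainable (ltnW qs) sL) eqj r.
  by rewrite !in_suppE eqj.
have X_blocks r t i i' : X i r != 0 -> X i' r != 0 ->
    in_supp (P s) i t -> in_supp (P s) i' t.
  move=> /(supported_neq0 X_fac.2.2) Xir /(supported_neq0 X_fac.2.2) Xi'r.
  rewrite !in_suppE => /eqP<-; apply/eqP/esym/(@rowkey_prefix _ beta_chainable q s).
  - by rewrite q0 ltnW.
  - exact: ltnW.
  - exact: in_supp_rowkey Xir Xi'r.
have [X'' X''_supp] := right_factor_exchange Y_fac.2.2 Y_opt SY_classes X_blocks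
  X'_fac.2.2 Y'_fac.2.2.
rewrite -frob_le => le; exists (X'' *m Y') => //.
by case: X'_fac => X'r [X'k _]; exists k', X'', Y'.
Qed.
End BsetExchange.

Lemma inf_image_le (R : realType) T (A : set T) (f g : T -> R) :
  (forall x, 0 <= g x) -> (forall x, A x -> exists2 y, A y & g y <= f x) ->
  inf [set g x | x in A] <= inf [set f x | x in A].
Proof.
move=> g_ge0 fg; have [[x Ax]|/nonemptyPn->] := pselect (A !=set0); last first.
  by rewrite !image_set0.
have g_lb : has_lbound [set g x | x in A] by exists 0 => _ [y _ <-].
apply: lb_le_inf => [|_ [y Ay <-]]; first by exists (f x), x.
by have [z Az gz] := fg y Ay; apply: le_trans gz; apply: ge_inf => //; exists z.
Qed.

Lemma Ebeta_le (R : realType) beta s m n (A B : 'M[R[i]]_(m, n)) :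
  Bset beta s B -> Ebeta beta s A <= frob (A - B).
Proof.
move=> B_in; apply: ge_inf; last by exists B.
by exists 0 => _ [B' _ <-]; exact: sqrtr_ge0.
Qed.

Theorem lemma7p11 (R : realType) (beta : seq pattern) (m n : nat)
  (M : 'M[R[i]]_(m, n)) (s q : nat) :
  chainable_arch beta ->
  m = prows (pat beta 1) -> n = pcols (pat beta (size beta)) ->
  (1 <= s)%N -> (s < size beta)%N -> (1 <= q)%N -> (q < size beta)%N ->
  forall N : 'M[R[i]]_(m, n),
    @Bset R beta q m n N ->
    frob (M - N) = Ebeta beta q M ->
    Ebeta beta s N <= Ebeta beta s M.
Proof.
move=> beta_chainable _ _ s0 sL q0 qL N [k [X [Y [X_fac [Y_fac ->]]]]] N_proj.
have XY_opt B : Bset beta q B -> frob (M - X *m Y) <= frob (M - B).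
  by move/(Ebeta_le M); rewrite N_proj.
have s_range : (0 < s < size beta)%N by rewrite s0 sL.
have q_range : (0 < q < size beta)%N by rewrite q0 qL.
apply: inf_image_le => [B|B]; first exact: sqrtr_ge0.
have [sq|qs] := leqP s q.
- exact: (Bset_exchange_prefix beta_chainable s_range q_range X_fac Y_fac XY_opt sq).
- exact: (Bset_exchange_suffix beta_chainable s_range q_range X_fac Y_fac XY_opt qs).
Qed.
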